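(* Let $\tau,\lambda$ be types of degree $d$. There exists an arrangement of $\tau$ into $\lambda$ if and only if $\lambda$ can be obtained from $\tau$ by a finite sequence of elementary forgets followed by a finite sequence of elementary merges. In particular $a(\tau,\lambda)>0$ if and only if $\tau\le\lambda$ in the partial order on types of degree $d$ generated by elementary merges and forgets.
   Context: A type of degree $d$ is a finite multiset of pairs $(b,m)$ of positive integers with $\sum bm=d$. For types $\tau=\{(b_1,m_1),\dots,(b_r,m_r)\}$ and $\lambda=\{(c_1,n_1),\dots,(c_s,n_s)\}$ (fixed orderings), an arrangement of $\tau$ into $\lambda$ is an $r\times s$ non-negative integer matrix $A$ with $A\vec n=\vec m$ and $A^T\vec b=\vec c$; $a(\tau,\lambda)$ is their number. Elementary merge: if two pairs $(d_1,m),(d_2,m)$ of $\tau$ have the same second entry, replace them by the single pair $(d_1+d_2,m)$. Elementary forget: replace a pair $(d_1,m_1)$ of $\tau$ by the two pairs $(d_1,m_1-a),(d_1,a)$ for some integer $0<a<m_1$. The partial order $\le$ on types of degree $d$ is: $\tau\le\lambda$ iff $\lambda$ is obtained from $\tau$ by a finite sequence of elementary merges and forgets. *)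

From mathcomp Require Import all_boot all_order all_algebra.
Set Implicit Arguments. Unset Strict Implicit. Unset Printing Implicit Defensive.

(* A type is a finite multiset of pairs (b,m) of positive integers; we
   represent it by a sequence, considered up to permutation (perm_eq). *)
Definition typ := seq (nat * nat).

Definition degree (t : typ) : nat := \sum_(p <- t) p.1 * p.2.

Definition is_type (d : nat) (t : typ) : Prop :=
  all (fun p : nat * nat => (0 < p.1) && (0 < p.2)) t /\ degree t = d.

(* Arrangement of t = ((b_i,m_i))_i into l = ((c_j,n_j))_j (fixed orderings):
   an r x s matrix A of nonnegative integers with A n = m and A^T b = c. *)
Definition is_arrangement (t l : typ) (A : 'M[nat]_(size t, size l)) : Prop :=
  (forall i : 'I_(size t),
      \sum_(j < size l) A i j * (nth (0,0) l j).2 = (nth (0,0) t i).2) /\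
  (forall j : 'I_(size l),
      \sum_(i < size t) A i j * (nth (0,0) t i).1 = (nth (0,0) l j).1).

Definition merge_step (t t' : typ) : Prop :=
  exists (u : typ) (d1 d2 m : nat),
    perm_eq t ((d1, m) :: (d2, m) :: u) /\ perm_eq t' ((d1 + d2, m) :: u).

Definition forget_step (t t' : typ) : Prop :=
  exists (u : typ) (d1 m1 a : nat),
    0 < a < m1 /\
    perm_eq t ((d1, m1) :: u) /\ perm_eq t' ((d1, m1 - a) :: (d1, a) :: u).

Inductive steps (R : typ -> typ -> Prop) : typ -> typ -> Prop :=
  | steps_refl t t' : perm_eq t t' -> steps R t t'
  | steps_cons t u v : R t u -> steps R u v -> steps R t v.

Definition type_le (t l : typ) : Prop :=
  steps (fun x y => merge_step x y \/ forget_step x y) t l.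

From mathcomp Require Import all_boot all_order all_algebra.
Set Implicit Arguments. Unset Strict Implicit. Unset Printing Implicit Defensive.

(* An arrangement A of tau = ((b_i, m_i))_i into lam = ((c_j, n_j))_j is the
   same thing as a common refinement of the two types: since
   m_i = sum_j A_ij n_j, forgets split (b_i, m_i) into A_ij copies of (b_i, n_j)
   for every j; regrouped by j, these parts merge into
   (sum_i A_ij b_i, n_j) = (c_j, n_j).  Conversely, arrangements compose by
   matrix product, combine block-diagonally under concatenation, and exist for
   a permutation, a single merge and a single forget, so tau <= lam yields
   one. *)

Definition perm_invariant (R : typ -> typ -> Prop) :=
  forall t t' u, perm_eq t t' -> R t u -> R t' u.

Definition catr_compatible (R : typ -> typ -> Prop) :=
  forall t u c, R t u -> R (t ++ c) (u ++ c).

Section Steps.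
Variable R : typ -> typ -> Prop.

Lemma step_steps t u : R t u -> steps R t u.
Proof. by move=> Htu; apply: steps_cons Htu (steps_refl _ (perm_refl u)). Qed.

Lemma steps_permR t u v : steps R t u -> perm_eq u v -> steps R t v.
Proof.
elim=> [a b Hab | a b c Hab _ IH] Hp; first exact: steps_refl (perm_trans Hab Hp).
exact: steps_cons Hab (IH Hp).
Qed.

Hypothesis R_perm : perm_invariant R.

Lemma steps_permL t u v : perm_eq t u -> steps R u v -> steps R t v.
Proof.
move=> Htu Huv; case: Huv Htu => [a b Hab | a b c Hab Hbc] Hta.
  exact: steps_refl (perm_trans Hta Hab).
by rewrite perm_sym in Hta; apply: steps_cons (R_perm Hta Hab) Hbc.
Qed.

Lemma steps_trans t u v : steps R t u -> steps R u v -> steps R t v.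
Proof.
elim=> [a b Hab | a b c Hab _ IH] Hv; first exact: steps_permL Hab Hv.
exact: steps_cons Hab (IH Hv).
Qed.

Hypothesis R_catr : catr_compatible R.

Lemma steps_catr t u c : steps R t u -> steps R (t ++ c) (u ++ c).
Proof.
elim=> [a b Hab | a b d Hab _ IH]; first by apply: steps_refl; rewrite perm_cat2r.
exact: steps_cons (R_catr c Hab) IH.
Qed.

Lemma steps_catl t u c : steps R t u -> steps R (c ++ t) (c ++ u).
Proof.
move=> /(steps_catr c) Htu.
by apply: (steps_permL _ (steps_permR Htu _)); rewrite perm_catC.
Qed.

Lemma steps_cat t t' u u' :
  steps R t t' -> steps R u u' -> steps R (t ++ u) (t' ++ u').
Proof. by move=> /(steps_catr u) Ht /(steps_catl t') Hu; apply: steps_trans Ht Hu. Qed.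

Lemma steps_flatten (I : eqType) (F G : I -> typ) (r : seq I) :
  (forall k, k \in r -> steps R (F k) (G k)) ->
  steps R (flatten (map F r)) (flatten (map G r)).
Proof.
elim: r => [|k r IH] HFG /=; first exact: steps_refl.
apply: steps_cat; first by apply: HFG; rewrite mem_head.
by apply: IH => k' Hk'; apply: HFG; rewrite in_cons Hk' orbT.
Qed.

End Steps.

Lemma sub_steps (R S : typ -> typ -> Prop) t u :
  (forall x y, R x y -> S x y) -> steps R t u -> steps S t u.
Proof.
move=> RS; elim=> [a b Hab | a b c Hab _ IH]; first exact: steps_refl.
exact: steps_cons (RS _ _ Hab) IH.
Qed.

Lemma merge_step_perm : perm_invariant merge_step.
Proof.
move=> t t' u Htt' [w [d1 [d2 [m [Ht Hu]]]]]; exists w, d1, d2, m.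
by rewrite perm_sym in Htt'; split=> //; apply: perm_trans Htt' Ht.
Qed.

Lemma forget_step_perm : perm_invariant forget_step.
Proof.
move=> t t' u Htt' [w [d1 [m1 [a [Ha [Ht Hu]]]]]]; exists w, d1, m1, a.
by rewrite perm_sym in Htt'; split=> //; split=> //; apply: perm_trans Htt' Ht.
Qed.

Lemma merge_step_catr : catr_compatible merge_step.
Proof.
move=> t u c [w [d1 [d2 [m [Ht Hu]]]]]; exists (w ++ c), d1, d2, m.
by split; [exact: perm_cat Ht (perm_refl c) | exact: perm_cat Hu (perm_refl c)].
Qed.

Lemma forget_step_catr : catr_compatible forget_step.
Proof.
move=> t u c [w [d1 [m1 [a [Ha [Ht Hu]]]]]]; exists (w ++ c), d1, m1, a.
by split=> //; split;
  [exact: perm_cat Ht (perm_refl c) | exact: perm_cat Hu (perm_refl c)].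
Qed.

(* Arrangements indexed by nat rather than by ordinals, so that they can be
   glued along concatenations of types. *)
Definition arranges (t l : typ) (f : nat -> nat -> nat) :=
  (forall i, i < size t ->
     \sum_(j < size l) f i j * (nth (0,0) l j).2 = (nth (0,0) t i).2) /\
  (forall j, j < size l ->
     \sum_(i < size t) f i j * (nth (0,0) t i).1 = (nth (0,0) l j).1).

Definition arrangeable (t l : typ) := exists f, arranges t l f.

Lemma arrangementP t l :
  (exists A : 'M[nat]_(size t, size l), is_arrangement A) <-> arrangeable t l.
Proof.
split=> [[A [Hrow Hcol]] | [f [Hrow Hcol]]].
- exists (fun i j => if insub i is Some i' then
                       if insub j is Some j' then A i' j' else 0 else 0).
  split=> [i Hi | j Hj].
  + by rewrite -(Hrow (Ordinal Hi)); apply: eq_bigr => j _; rewrite valK insubT.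
  + by rewrite -(Hcol (Ordinal Hj)); apply: eq_bigr => i _; rewrite valK insubT.
- exists (\matrix_(i, j) f i j)%R; split=> [i | j].
  + by rewrite -(Hrow _ (ltn_ord i)); apply: eq_bigr => j _; rewrite mxE.
  + by rewrite -(Hcol _ (ltn_ord j)); apply: eq_bigr => i _; rewrite mxE.
Qed.

Lemma sum_eq_delta n i (F : nat -> nat) :
  i < n -> \sum_(j < n) (i == j) * F j = F i.
Proof.
move=> Hi; rewrite (bigD1 (Ordinal Hi)) //= eqxx mul1n big1 ?addn0 // => j.
by rewrite -val_eqE /= eq_sym => /negbTE ->.
Qed.

Lemma arrangeable_refl t : arrangeable t t.
Proof.
exists (fun i j => i == j); split=> i Hi.
  exact: (sum_eq_delta (fun k => (nth (0,0) t k).2) Hi).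
rewrite -(sum_eq_delta (fun k => (nth (0,0) t k).1) Hi).
by apply: eq_bigr => k _; rewrite eq_sym.
Qed.

Lemma arrangeable_trans t u l : arrangeable t u -> arrangeable u l -> arrangeable t l.
Proof.
move=> [f [Hf1 Hf2]] [g [Hg1 Hg2]].
exists (fun i k => \sum_(j < size u) f i j * g j k); split=> [i Hi | k Hk].
- rewrite -Hf1 //; under eq_bigr => k _ do rewrite big_distrl /=.
  rewrite exchange_big; apply: eq_bigr => j _ /=.
  by rewrite -Hg1 // big_distrr /=; apply: eq_bigr => k _; rewrite mulnA.
- rewrite -Hg2 //; under eq_bigr => i _ do rewrite big_distrl /=.
  rewrite exchange_big; apply: eq_bigr => j _ /=.
  by rewrite -Hf2 // big_distrr /=; apply: eq_bigr => i _; rewrite mulnCA mulnA.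
Qed.

Lemma nth_cat_addn (a b : typ) k : nth (0,0) (a ++ b) (size a + k) = nth (0,0) b k.
Proof. by rewrite nth_cat ltnNge leq_addr addKn. Qed.

Lemma arrangeable_cat a a' b b' :
  arrangeable a a' -> arrangeable b b' -> arrangeable (a ++ b) (a' ++ b').
Proof.
move=> [f [Hf1 Hf2]] [g [Hg1 Hg2]].
exists (fun i j => if i < size a then (if j < size a' then f i j else 0)
                   else (if j < size a' then 0 else g (i - size a) (j - size a'))).
split=> [i | j]; rewrite !size_cat => Hsize; rewrite big_split_ord /= nth_cat.
- case: ifP => Hia.
  + rewrite -Hf1 // [X in _ + X]big1 ?addn0 => [|j _]; last by rewrite ltnNge leq_addr.
    by apply: eq_bigr => j _; rewrite ltn_ord nth_cat ltn_ord.
  + rewrite big1 ?add0n => [|j _]; last by rewrite ltn_ord.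
    rewrite -Hg1; last by rewrite ltn_subLR // leqNgt Hia.
    by apply: eq_bigr => j _; rewrite ltnNge leq_addr addKn nth_cat_addn.
- case: ifP => Hja.
  + rewrite -Hf2 // [X in _ + X]big1 ?addn0 => [|i _]; last by rewrite ltnNge leq_addr.
    by apply: eq_bigr => i _; rewrite ltn_ord nth_cat ltn_ord.
  + rewrite big1 ?add0n => [|i _]; last by rewrite ltn_ord.
    rewrite -Hg2; last by rewrite ltn_subLR // leqNgt Hja.
    by apply: eq_bigr => i _; rewrite ltnNge leq_addr addKn nth_cat_addn.
Qed.

Lemma arrangeable_swap x y : arrangeable [:: x; y] [:: y; x].
Proof.
exists (fun i j => i + j == 1).
by split=> -[|[|i]] // _; rewrite !big_ord_recl big_ord0 /= ?mul0n ?mul1n ?addn0.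
Qed.

Lemma arrangeable_move x p q : arrangeable (x :: p ++ q) (p ++ x :: q).
Proof.
elim: p => [|y p IH]; first exact: arrangeable_refl.
apply: (@arrangeable_trans _ (y :: x :: p ++ q)).
  exact: arrangeable_cat (arrangeable_swap x y) (arrangeable_refl (p ++ q)).
exact: arrangeable_cat (arrangeable_refl [:: y]) IH.
Qed.

Lemma arrangeable_perm t t' : perm_eq t t' -> arrangeable t t'.
Proof.
elim: t t' => [|x t IH] t' Htt'.
  by move: Htt'; rewrite perm_sym => /perm_nilP ->; exact: arrangeable_refl.
have Hx : x \in t' by rewrite -(perm_mem Htt') mem_head.
case/splitPr: Hx Htt' => p q Htt'.
apply: (@arrangeable_trans _ (x :: p ++ q)); last exact: arrangeable_move.
apply: arrangeable_cat (arrangeable_refl [:: x]) (IH _ _).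
by rewrite -(perm_cons x) (perm_trans Htt') // -cat1s perm_catCA.
Qed.

Lemma arrangeable_merge d1 d2 m : arrangeable [:: (d1, m); (d2, m)] [:: (d1 + d2, m)].
Proof.
exists (fun _ _ => 1).
by split=> -[|[|i]] // _; rewrite !big_ord_recl big_ord0 /= ?mul1n ?addn0.
Qed.

Lemma arrangeable_forget d m a :
  a <= m -> arrangeable [:: (d, m)] [:: (d, m - a); (d, a)].
Proof.
move=> Ham; exists (fun _ _ => 1).
by split=> -[|[|i]] // _; rewrite !big_ord_recl big_ord0 /= ?mul1n ?addn0 ?subnK.
Qed.

Lemma type_le_arrangeable t l : type_le t l -> arrangeable t l.
Proof.
elim=> [a b Hab | a u v Hau _ IH]; first exact: arrangeable_perm.
apply: arrangeable_trans IH.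
case: Hau => [[w [d1 [d2 [m [Ha Hu]]]]] | [w [d1 [m1 [a0 [/andP[_ Ha0] [Ha Hu]]]]]]];
  rewrite perm_sym in Hu;
  apply: arrangeable_trans (arrangeable_perm Ha)
                           (arrangeable_trans _ (arrangeable_perm Hu)).
- exact: arrangeable_cat (arrangeable_merge d1 d2 m) (arrangeable_refl w).
- exact: arrangeable_cat (arrangeable_forget d1 (ltnW Ha0)) (arrangeable_refl w).
Qed.

Lemma forget_split b s : s != [::] -> all (fun x => 0 < x) s ->
  steps forget_step [:: (b, sumn s)] [seq (b, x) | x <- s].
Proof.
elim: s => [|x [|y s] IH] //= _ /andP[x_pos s_pos].
  by apply: steps_refl; rewrite addn0.
have S_pos : 0 < y + sumn s by move: s_pos => /andP[y_pos _]; rewrite ltn_addr.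
apply: (@steps_trans _ forget_step_perm _ [:: (b, x); (b, y + sumn s)]).
  apply: step_steps; exists [::], b, (x + (y + sumn s)), (y + sumn s).
  by rewrite S_pos -{1}[y + _]add0n ltn_add2r x_pos addnK.
exact: (steps_catl forget_step_perm forget_step_catr [:: (b, x)] (IH erefl s_pos)).
Qed.

Lemma merge_join m s : s != [::] ->
  steps merge_step [seq (x, m) | x <- s] [:: (sumn s, m)].
Proof.
elim: s => [|x [|y s] IH] //= _; first by apply: steps_refl; rewrite addn0.
apply: (@steps_trans _ merge_step_perm _ [:: (x, m); (y + sumn s, m)]).
  exact: (steps_catl merge_step_perm merge_step_catr [:: (x, m)] (IH erefl)).
by apply: step_steps; exists [::], x, (y + sumn s), m.
Qed.

Lemma perm_flatten_transpose (T : eqType) (I J : Type) (g : I -> J -> seq T)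
    (r : seq I) (s : seq J) :
  perm_eq (flatten [seq flatten [seq g i j | j <- s] | i <- r])
          (flatten [seq flatten [seq g i j | i <- r] | j <- s]).
Proof.
apply/permP => a; rewrite !count_flatten -!map_comp !sumnE !big_map.
under eq_bigr do rewrite /= count_flatten -map_comp sumnE big_map.
under [RHS]eq_bigr do rewrite /= count_flatten -map_comp sumnE big_map.
exact: exchange_big.
Qed.

Lemma flatten_nth_iota (t : typ) :
  flatten [seq [:: nth (0,0) t i] | i <- iota 0 (size t)] = t.
Proof. by rewrite (map_comp (fun p => [:: p])) -/(mkseq _ _) mkseq_nth flatten_seq1. Qed.

Lemma sumn_flatten_nseq n (k x : nat -> nat) :
  sumn (flatten [seq nseq (k i) (x i) | i <- iota 0 n]) = \sum_(i < n) k i * x i.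
Proof.
rewrite sumn_flatten -map_comp sumnE big_map.
rewrite -(big_mkord xpredT (fun i => k i * x i)) /index_iota subn0.
by apply: eq_bigr => i _; rewrite /= sumn_nseq mulnC.
Qed.

Definition pos_pair (p : nat * nat) := (0 < p.1) && (0 < p.2).

Definition refinement (t l : typ) (f : nat -> nat -> nat) : typ :=
  flatten [seq flatten [seq nseq (f i j) ((nth (0,0) t i).1, (nth (0,0) l j).2)
                       | j <- iota 0 (size l)] | i <- iota 0 (size t)].

Lemma steps_forget_refinement t l (f : nat -> nat -> nat) :
  all pos_pair t -> all pos_pair l ->
  (forall i, i < size t ->
     \sum_(j < size l) f i j * (nth (0,0) l j).2 = (nth (0,0) t i).2) ->
  steps forget_step t (refinement t l f).
Proof.
move=> t_pos l_pos Hrow; rewrite /refinement -{1}(flatten_nth_iota t).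
apply: (steps_flatten forget_step_perm forget_step_catr) => i; rewrite mem_iota => /= Hi.
set s := flatten [seq nseq (f i j) (nth (0,0) l j).2 | j <- iota 0 (size l)].
have Hs : sumn s = (nth (0,0) t i).2 by rewrite sumn_flatten_nseq Hrow.
have -> : flatten [seq nseq (f i j) ((nth (0,0) t i).1, (nth (0,0) l j).2)
                  | j <- iota 0 (size l)] = [seq ((nth (0,0) t i).1, x) | x <- s].
  rewrite map_flatten -map_comp; congr flatten.
  by apply: eq_map => j; rewrite /= map_nseq.
case: (nth (0,0) t i) Hs (allP t_pos _ (mem_nth (0,0) Hi)) => b m /= <- /andP[_ s_pos].
apply: forget_split; first by apply: contraTneq s_pos => ->.
apply/allP => x /flattenP[_ /mapP[j Hj ->]]; rewrite mem_nseq => /andP[_ /eqP ->].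
by rewrite mem_iota in Hj; case/andP: (allP l_pos _ (mem_nth (0,0) Hj)).
Qed.

Lemma steps_refinement_merge t l (f : nat -> nat -> nat) :
  all pos_pair l ->
  (forall j, j < size l ->
     \sum_(i < size t) f i j * (nth (0,0) t i).1 = (nth (0,0) l j).1) ->
  steps merge_step (refinement t l f) l.
Proof.
move=> l_pos Hcol.
rewrite /refinement; apply: (steps_permL merge_step_perm (perm_flatten_transpose _ _ _)).
rewrite -[X in steps _ _ X](flatten_nth_iota l).
apply: (steps_flatten merge_step_perm merge_step_catr) => j; rewrite mem_iota => /= Hj.
set s := flatten [seq nseq (f i j) (nth (0,0) t i).1 | i <- iota 0 (size t)].
have Hs : sumn s = (nth (0,0) l j).1 by rewrite sumn_flatten_nseq Hcol.
have -> : flatten [seq nseq (f i j) ((nth (0,0) t i).1, (nth (0,0) l j).2)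
                  | i <- iota 0 (size t)] = [seq (x, (nth (0,0) l j).2) | x <- s].
  rewrite map_flatten -map_comp; congr flatten.
  by apply: eq_map => i; rewrite /= map_nseq.
case: (nth (0,0) l j) Hs (allP l_pos _ (mem_nth (0,0) Hj)) => c n /= <- /andP[s_pos _].
by apply: merge_join; apply: contraTneq s_pos => ->.
Qed.

Lemma arrangeable_forget_merge t l : all pos_pair t -> all pos_pair l ->
  arrangeable t l -> exists mu, steps forget_step t mu /\ steps merge_step mu l.
Proof.
move=> t_pos l_pos [f [Hrow Hcol]]; exists (refinement t l f).
by split; [exact: steps_forget_refinement | exact: steps_refinement_merge].
Qed.

Lemma forget_merge_type_le t mu l :
  steps forget_step t mu -> steps merge_step mu l -> type_le t l.
Proof.
move=> Hforget Hmerge; apply: steps_trans.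
- move=> x x' y Hx [H | H].
  + by left; exact: merge_step_perm Hx H.
  + by right; exact: forget_step_perm Hx H.
- by apply: sub_steps Hforget => x y; right.
- by apply: sub_steps Hmerge => x y; left.
Qed.

Theorem proposition4 (d : nat) (tau lam : typ) :
  is_type d tau -> is_type d lam ->
  ((exists A : 'M[nat]_(size tau, size lam), is_arrangement A) <->
     (exists mu : typ, steps forget_step tau mu /\ steps merge_step mu lam))
  /\
  ((exists A : 'M[nat]_(size tau, size lam), is_arrangement A) <->
     type_le tau lam).
Proof.
move=> [tau_pos _] [lam_pos _].
have arr_forget_merge := arrangeable_forget_merge tau_pos lam_pos.
split; split.
- by move/arrangementP/arr_forget_merge.
- case=> mu [Hf Hm].
  exact/arrangementP/type_le_arrangeable/(forget_merge_type_le Hf Hm).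
- move/arrangementP/arr_forget_merge => [mu [Hf Hm]].
  exact: forget_merge_type_le Hf Hm.
- by move/type_le_arrangeable/arrangementP.
Qed.
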